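(* Let $R$ be a QNA and, for $k\in[0,N]$, let $Q_k$ be the subgroup of $Q=X(\mathcal H)$ generated by $\underline{\beta_1},\ldots,\underline{\beta_k}$, where $\underline{\beta_i}=\operatorname{wt}(x_i)$. For $k\in[1,N]$: (a) if $\delta_k\neq0$ then $Q_k=Q_{k-1}$; (b) if $\delta_k=0$ then $Q_k=Q_{k-1}\oplus\mathbb Z\underline{\beta_k}$.
   Context: ${\mathbb K}$ is a field of characteristic $0$. A quantum nilpotent algebra (QNA) is an iterated Ore extension $R={\mathbb K}[x_1][x_2;\sigma_2,\delta_2]\cdots[x_N;\sigma_N,\delta_N]$, where $R_k={\mathbb K}[x_1][x_2;\sigma_2,\delta_2]\cdots[x_k;\sigma_k,\delta_k]$ ($R_0={\mathbb K}$), $\sigma_k$ is a ${\mathbb K}$-automorphism and $\delta_k$ a $\sigma_k$-derivation of $R_{k-1}$, together with a torus $\mathcal H$ acting rationally by ${\mathbb K}$-automorphisms on $R$ with each $x_i$ an $\mathcal H$-eigenvector, such that: (i) $\sigma_k(x_j)=\lambda_{kj}x_j$ for $j<k$, with $\lambda_{kj}\in{\mathbb K}^*$; (ii) $\delta_k$ is locally nilpotent on $R_{k-1}$; (iii) for each $k$ there exist $h_k\in\mathcal H$ and $q_k\in{\mathbb K}^*$ not a root of unity such that $h_k$ acts on $R_{k-1}$ as $\sigma_k$ and $h_k\cdot x_k=q_kx_k$. The rank is $n=|\{k:\delta_k=0\}|$, and $\mathcal H=({\mathbb K}^* )^n$ is taken to be this maximal torus. Its character group $Q=X(\mathcal H)\cong\mathbb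 Z^n$ grades $R$; homogeneous elements are the $\mathcal H$-eigenvectors, and for homogeneous $a$, $\operatorname{wt}(a)=(\alpha_1,\ldots,\alpha_n)\in\mathbb Z^n$ is defined by $(h_1,\ldots,h_n)\cdot a=h_1^{\alpha_1}\cdots h_n^{\alpha_n}a$. *)

From HB Require Import structures.
From mathcomp Require Import all_boot all_order all_algebra.
Set Implicit Arguments. Unset Strict Implicit. Unset Printing Implicit Defensive.
Import Order.TTheory GRing.Theory Num.Theory.
Local Open Scope ring_scope.

Notation torus_elt K n := {ffun 'I_n -> K}.
Notation wtT n := {ffun 'I_n -> int}.

Section QNA.
Variables (K : fieldType) (R : algType K) (N n : nat).

(* Elements of the torus H = (K^* )^n are represented by functions 'I_n -> K
   with nonzero entries; characters (elements of Q = X(H) = Z^n) by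
   functions 'I_n -> int. *)
Local Notation torus_elt := {ffun 'I_n -> K}.
Local Notation wtT := {ffun 'I_n -> int}.

Definition in_torus (h : torus_elt) : Prop := forall j, h j != 0.
Definition torus_one : torus_elt := [ffun => 1].
Definition torus_mul (h h' : torus_elt) : torus_elt := [ffun j => h j * h' j].

Definition chi (a : wtT) (h : torus_elt) : K := \prod_(j < n) (h j) ^ (a j).

Variable act : torus_elt -> R -> R.

Definition is_weight (a : R) (alpha : wtT) : Prop :=
  forall h, in_torus h -> act h a = chi alpha h *: a.

(* Variables x_1..x_N are indexed by 'I_N, 0-based: x k is the paper's x_{k+1}. *)
Variable x : 'I_N -> R.

(* gen k r : r lies in R_k, the subalgebra generated by the x i with i < k
   (i.e. the paper's x_1, ..., x_k); gen 0 = K.1 *)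
Definition gen (k : nat) (r : R) : Prop :=
  exists s : seq (K * seq 'I_N),
    (forall p, p \in s -> forall i, i \in p.2 -> (i < k)%N) /\
    r = \sum_(p <- s) p.1 *: \prod_(i <- p.2) x i.

Variables (sigma delta : 'I_N -> R -> R).

(* sigma k is a K-algebra automorphism of R_{k} (paper: of R_{k-1}) *)
Definition is_aut_on (k : nat) (s : R -> R) : Prop :=
  (forall a, gen k a -> gen k (s a)) /\
  (forall b, gen k b -> exists2 a, gen k a & s a = b) /\
  (forall a b, gen k a -> gen k b -> s a = s b -> a = b) /\
  (forall c a b, gen k a -> gen k b -> s (c *: a + b) = c *: s a + s b) /\
  (forall a b, gen k a -> gen k b -> s (a * b) = s a * s b) /\
  s 1 = 1.

Definition is_sder_on (k : nat) (s d : R -> R) : Prop :=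
  (forall a, gen k a -> gen k (d a)) /\
  (forall c a b, gen k a -> gen k b -> d (c *: a + b) = c *: d a + d b) /\
  (forall a b, gen k a -> gen k b -> d (a * b) = s a * d b + d a * b).

Definition delta_zero (k : 'I_N) : Prop := forall r, gen k r -> delta k r = 0.

(* R = K[x_1][x_2;sigma_2,delta_2]...[x_N;sigma_N,delta_N], described internally:
   R = R_N; R_k is generated by R_{k-1} and x_k, it is a free left R_{k-1}-module
   on the powers of x_k, and x_k r = sigma_k(r) x_k + delta_k(r) for r in R_{k-1},
   with sigma_k a K-automorphism and delta_k a sigma_k-derivation of R_{k-1}. *)
Definition iterated_Ore : Prop :=
  (forall r, gen N r) /\
  (forall k : 'I_N, is_aut_on k (sigma k)) /\
  (forall k : 'I_N, is_sder_on k (sigma k) (delta k)) /\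
  (forall (k : 'I_N) r, gen k r -> x k * r = sigma k r * x k + delta k r) /\
  (forall (k : 'I_N) (c : seq R), (forall r, r \in c -> gen k r) ->
      \sum_(i < size c) c`_i * x k ^+ i = 0 -> forall i, c`_i = 0).

(* rational action of the torus H = (K^* )^n by K-algebra automorphisms;
   faithful (H is a (maximal) torus of automorphisms of R). *)
Definition rational_torus_action : Prop :=
  (forall h, in_torus h -> forall c a b, act h (c *: a + b) = c *: act h a + act h b) /\
  (forall h, in_torus h -> forall a b, act h (a * b) = act h a * act h b) /\
  (forall h, in_torus h -> act h 1 = 1) /\
  (forall a, act torus_one a = a) /\
  (forall h h', in_torus h -> in_torus h' ->
      forall a, act (torus_mul h h') a = act h (act h' a)) /\
  (forall r, exists s : seq (R * wtT),
      (forall p, p \in s -> is_weight p.1 p.2) /\ r = \sum_(p <- s) p.1) /\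
  (forall h, in_torus h -> (forall a, act h a = a) -> h = torus_one).

Definition is_QNA : Prop :=
  iterated_Ore /\
  rational_torus_action /\
  (forall i, exists alpha, is_weight (x i) alpha) /\
  (forall k j : 'I_N, (j < k)%N -> exists2 l : K, l != 0 & sigma k (x j) = l *: x j) /\
  (forall (k : 'I_N) r, gen k r -> exists m, iter m (delta k) r = 0) /\
  (forall k : 'I_N, exists2 h, in_torus h &
      exists q : K, q != 0 /\ (forall m, q ^+ m.+1 != 1) /\
        (forall r, gen k r -> act h r = sigma k r) /\ act h (x k) = q *: x k) /\
  (* n = rank = #{k | delta_k = 0} *)
  (exists f : 'I_n -> 'I_N, injective f /\
      forall k, delta_zero k <-> exists j, f j = k).

Definition inQ (beta : 'I_N -> wtT) (k : nat) (v : wtT) : Prop :=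
  exists c : 'I_N -> int, v = \sum_(i < N | (i < k)%N) beta i *~ c i.

End QNA.

From HB Require Import structures.
From mathcomp Require Import all_boot all_order all_algebra.
Import Order.TTheory GRing.Theory Num.Theory.
Set Implicit Arguments. Unset Strict Implicit. Unset Printing Implicit Defensive.
Local Open Scope ring_scope.

(* (a) A sigma_k-derivation vanishing on x_1, ..., x_(k-1) vanishes on R_(k-1), so
   delta_k <> 0 gives j < k with delta_k(x_j) = x_k x_j - lambda x_j x_k <> 0.  This
   element of R_(k-1) is homogeneous of weight beta_k + beta_j; as distinct characters
   of the torus are linearly independent (char K = 0), that weight is the weight of one
   of its monomials in x_1, ..., x_(k-1), whence beta_k lies in Q_(k-1).
   (b) By (a), Q_t is spanned by the weights beta_(f j) of the n indices f j < t with
   delta = 0.  If m beta_k lies in Q_(k-1) with m <> 0, these n weights satisfy a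
   nontrivial integer relation, so a nonzero u in Z^n is orthogonal to every weight.
   The torus element (2^u_1, ..., 2^u_n) then fixes every x_i, hence all of R,
   contradicting faithfulness. *)

Section IntegerSpan.
Variables (M : zmodType) (m : nat).

Definition zspan (P : pred 'I_m) (b : 'I_m -> M) (v : M) : Prop :=
  exists c : 'I_m -> int, v = \sum_(i < m | P i) b i *~ c i.

Variables (P : pred 'I_m) (b : 'I_m -> M).

Lemma zspan0 : zspan P b 0.
Proof. by exists (fun _ => 0); rewrite big1 // => i _; rewrite mulr0z. Qed.

Lemma zspanD u v : zspan P b u -> zspan P b v -> zspan P b (u + v).
Proof.
move=> [c ->] [d ->]; exists (fun i => c i + d i).
by rewrite -big_split; apply: eq_bigr => i _; rewrite mulrzDr.
Qed.

Lemma zspanMz u z : zspan P b u -> zspan P b (u *~ z).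
Proof.
move=> [c ->]; exists (fun i => c i * z).
by rewrite mulrz_suml; apply: eq_bigr => i _; rewrite mulrzA.
Qed.

Lemma zspan_gen i : P i -> zspan P b (b i).
Proof.
move=> Pi; exists (fun j => (j == i)%:Z).
rewrite (bigD1 i) //= eqxx mulr1z big1 ?addr0 // => j /andP[_ /negbTE ->].
by rewrite mulr0z.
Qed.

Lemma zspan_sum (I : eqType) (s : seq I) (F : I -> M) :
  (forall y, y \in s -> zspan P b (F y)) -> zspan P b (\sum_(y <- s) F y).
Proof.
elim: s => [|y s IHs] Fs; first by rewrite big_nil; apply: zspan0.
rewrite big_cons; apply: zspanD; first by apply: Fs; rewrite mem_head.
by apply: IHs => z zs; apply: Fs; rewrite inE zs orbT.
Qed.

Lemma zspan_sub (P' : pred 'I_m) v :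
  (forall i, P i -> P' i) -> zspan P b v -> zspan P' b v.
Proof.
move=> PP' [c ->]; exists (fun i => if P i then c i else 0).
rewrite big_mkcond [RHS]big_mkcond; apply: eq_bigr => i _.
by case: (boolP (P i)) => [/PP' /= -> | _] //; case: (P' i); rewrite ?mulr0z.
Qed.

Lemma zspan_kernel (L : {additive M -> int}) v :
  (forall i, P i -> L (b i) = 0) -> zspan P b v -> L v = 0.
Proof.
move=> Lb [c ->]; rewrite raddf_sum big1 // => i Pi.
by rewrite raddfMz Lb // mul0rz.
Qed.

Lemma zspan_relation j0 z :
  ~~ P j0 -> zspan P b (b j0 *~ z) ->
  exists2 w : 'I_m -> int, w j0 = z & \sum_j b j *~ w j = 0.
Proof.
move=> Pj0 [c bc]; exists (fun j => (j == j0)%:Z * z - (if P j then c j else 0)).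
  by rewrite eqxx mul1r (negbTE Pj0) subr0.
rewrite (eq_bigr (fun j => b j *~ ((j == j0)%:Z * z) - b j *~ (if P j then c j else 0)));
  last by move=> j _; rewrite mulrzBr.
rewrite sumrB (bigD1 j0) //= eqxx mul1r big1 ?addr0; last first.
  by move=> j /negbTE ->; rewrite mul0r mulr0z.
rewrite bc big_mkcond; apply/eqP; rewrite subr_eq0; apply/eqP/eq_bigr => j _.
by case: (P j); rewrite ?mulr0z.
Qed.

End IntegerSpan.

Definition dotz n (u : 'I_n -> int) (v : wtT n) : int := \sum_l v l * u l.

Lemma dotz_is_zmod_morphism n (u : 'I_n -> int) : zmod_morphism (dotz u).
Proof.
by move=> v w; rewrite /dotz -sumrB; apply: eq_bigr => l _; rewrite !ffunE mulrBl.
Qed.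

HB.instance Definition _ n (u : 'I_n -> int) :=
  GRing.isZmodMorphism.Build (wtT n) int (dotz u) (dotz_is_zmod_morphism u).


Lemma int_relation_orthogonal n (b : 'I_n -> wtT n) (w : 'I_n -> int) j0 :
  w j0 != 0 -> \sum_j b j *~ w j = 0 ->
  exists2 u : 'I_n -> int, (exists l, u l != 0) & forall j, dotz u (b j) = 0.
Proof.
move=> wj0 bw0.
pose B : 'M[rat]_n := \matrix_(j, l) (b j l)%:~R.
pose wq : 'rV[rat]_n := \row_j (w j)%:~R.
have wB : wq *m B = 0.
  apply/rowP => l; rewrite !mxE.
  transitivity (((\sum_j b j *~ w j) l)%:~R : rat); last by rewrite bw0 ffunE.
  rewrite sum_ffunE rmorph_sum /=.
  by apply: eq_bigr => j _; rewrite !mxE ffunMzE -intrM mulrzz mulrC.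
have wq0 : wq != 0.
  by apply/eqP => /rowP /(_ j0) /eqP; rewrite !mxE intr_eq0 (negbTE wj0).
have /det0P[v v0 vBT] : \det B^T == 0 by rewrite det_tr; apply/det0P; exists wq.
have [l0 vl0] : exists l, v 0 l != 0.
  apply/existsP; apply: contraR v0 => /existsPn v0; apply/eqP/rowP => l.
  by rewrite mxE; apply/eqP; move: (v0 l); rewrite negbK.
pose d := \prod_l denq (v 0 l).
have d0 : d != 0 by apply/prodf_neq0 => l _; apply: denq_neq0.
pose u l := numq (v 0 l) * \prod_(l' | l' != l) denq (v 0 l').
have uE l : (u l)%:~R = v 0 l * d%:~R :> rat.
  by rewrite intrM numqE /d [X in _ = _ * X%:~R](bigD1 l) //= intrM mulrA.
exists u; first by exists l0; rewrite -(intr_eq0 rat) uE mulf_neq0 ?intr_eq0.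
move=> j; apply/eqP; rewrite -(intr_eq0 rat) rmorph_sum /=.
have := congr1 (fun r : 'rV_n => r 0 j) vBT; rewrite !mxE => vBj.
rewrite (eq_bigr (fun l => v 0 l * B^T l j * d%:~R)); last first.
  by move=> l _; rewrite intrM uE !mxE mulrA [_%:~R * v 0 l]mulrC.
by rewrite -mulr_suml vBj mul0r.
Qed.

Section CharacteristicZero.
Variables (K : fieldType) (n : nat).
Hypothesis K0 : [pchar K] =i pred0.

Lemma two_neq0 : (2 : K) != 0.
Proof. by move/pcharf0P: K0 => ->. Qed.

Lemma expr2_eq1 m : (2 : K) ^+ m = 1 -> m = 0%N.
Proof.
move=> E; have : ((2 ^ m - 1)%N%:R : K) == 0 by rewrite natrB ?expn_gt0 // natrX E subrr.
move/pcharf0P: K0 => ->; rewrite subn_eq0.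
by rewrite -[X in (_ <= X)%N](expn0 2) leq_exp2l // leqn0 => /eqP.
Qed.

Lemma expr2z_eq1 z : (2 : K) ^ z = 1 -> z = 0.
Proof.
case: z => m; first by move/expr2_eq1 ->.
by rewrite NegzE -exprnN => /eqP; rewrite invr_eq1 => /eqP /expr2_eq1.
Qed.

Definition exp2_torus (u : 'I_n -> int) : torus_elt K n := [ffun l => 2 ^ u l].

Lemma exp2_torusP u : in_torus (exp2_torus u).
Proof. by move=> l; rewrite ffunE expfz_neq0 ?two_neq0. Qed.

Lemma chi_exp2 (a : wtT n) u : chi a (exp2_torus u) = 2 ^ dotz u a.
Proof.
rewrite /chi /dotz; apply: (big_rec2 (fun p s => p = 2 ^ s)) => [|l p s _ ->].
  by rewrite expr0z.
by rewrite ffunE expfzDr ?two_neq0 // exprz_exp [u l * _]mulrC.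
Qed.

Lemma chi0 (h : torus_elt K n) : chi 0 h = 1.
Proof. by rewrite /chi big1 // => j _; rewrite ffunE expr0z. Qed.

Lemma chiD (a b : wtT n) (h : torus_elt K n) :
  in_torus h -> chi (a + b) h = chi a h * chi b h.
Proof.
by move=> th; rewrite /chi -big_split; apply: eq_bigr => j _; rewrite ffunE expfzDr.
Qed.

Lemma chi_separation (a b : wtT n) : a != b ->
  exists2 h : torus_elt K n, in_torus h & chi a h != chi b h.
Proof.
move=> ab; have [j abj] : exists j, a j != b j.
  apply/existsP; apply: contraR ab => /existsPn ab; apply/eqP/ffunP => j.
  by move: (ab j); rewrite negbK => /eqP.
pose h := exp2_torus (fun l => (l == j)%:Z).
have chiE (c : wtT n) : chi c h = 2 ^ c j.
  rewrite chi_exp2 /dotz (bigD1 j) //= eqxx mulr1 big1 ?addr0 // => l /negbTE ->.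
  by rewrite mulr0.
exists h; first exact: exp2_torusP.
rewrite !chiE; apply: contra abj => /eqP E; rewrite -subr_eq0; apply/eqP/expr2z_eq1.
by rewrite expfzDr ?two_neq0 // E -invr_expz divff // expfz_neq0 ?two_neq0.
Qed.

End CharacteristicZero.

Section TorusAction.
Variables (K : fieldType) (R : algType K) (n : nat) (act : torus_elt K n -> R -> R).
Hypothesis Hact : rational_torus_action act.

Section FixedTorusElement.
Variable h : torus_elt K n.
Hypothesis th : in_torus h.

Lemma act_linear c a b : act h (c *: a + b) = c *: act h a + act h b.
Proof. by case: Hact => lin _; apply: lin. Qed.

Lemma act0 : act h 0 = 0.
Proof.
have E := act_linear 1 0 0; rewrite !scale1r addr0 in E.
by apply: (@addrI _ (act h 0)); rewrite addr0 -E.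
Qed.

Lemma actD a b : act h (a + b) = act h a + act h b.
Proof. by rewrite -[a]scale1r act_linear !scale1r. Qed.

Lemma actZ c a : act h (c *: a) = c *: act h a.
Proof. by rewrite -[_ *: a]addr0 act_linear act0 addr0. Qed.

Lemma act_sum (I : Type) (s : seq I) (F : I -> R) :
  act h (\sum_(i <- s) F i) = \sum_(i <- s) act h (F i).
Proof. by apply: (big_morph _ actD act0). Qed.

Lemma actM a b : act h (a * b) = act h a * act h b.
Proof. by case: Hact => _ [mul _]; apply: mul. Qed.

Lemma act1 : act h 1 = 1.
Proof. by case: Hact => _ [_ [one _]]; apply: one. Qed.

End FixedTorusElement.

Lemma weightD a b mu : is_weight act a mu -> is_weight act b mu -> is_weight act (a + b) mu.
Proof. by move=> wa wb h th; rewrite actD // wa // wb // scalerDr. Qed.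

Lemma weightZ a c mu : is_weight act a mu -> is_weight act (c *: a) mu.
Proof. by move=> wa h th; rewrite actZ // wa // !scalerA mulrC. Qed.

Lemma weightM a b mu nu :
  is_weight act a mu -> is_weight act b nu -> is_weight act (a * b) (mu + nu).
Proof.
move=> wa wb h th; rewrite actM // wa // wb // chiD //.
by rewrite -scalerAl -scalerAr scalerA.
Qed.

Lemma weight1 : is_weight act 1 0.
Proof. by move=> h th; rewrite act1 // chi0 scale1r. Qed.

Lemma weight_prod (I : Type) (s : seq I) (F : I -> R) (mu : I -> wtT n) :
  (forall i, is_weight act (F i) (mu i)) ->
  is_weight act (\prod_(i <- s) F i) (\sum_(i <- s) mu i).
Proof.
move=> wF; elim: s => [|i s IHs]; first by rewrite !big_nil; apply: weight1.
by rewrite !big_cons; apply: weightM.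
Qed.

Hypothesis K0 : [pchar K] =i pred0.

(* Dedekind's argument: [act h - chi mu h], with [mu] the weight of the first
   summand, kills that summand and only rescales the others. *)
Lemma weight_sum_eq0 (s : seq (R * wtT n)) (g : wtT n) (d : R) :
  (forall p, p \in s -> is_weight act p.1 p.2) -> (forall p, p \in s -> p.2 != g) ->
  is_weight act d g -> d = \sum_(p <- s) p.1 -> d = 0.
Proof.
have [m] := ubnP (size s); elim: m s d => // m IHm [|[a mu] s] d /= sm ws sg wd dE.
  by rewrite dE big_nil.
have [h th chi_neq] := chi_separation K0 (sg _ (mem_head _ _)).
pose s' := [seq ((chi p.2 h - chi mu h) *: p.1, p.2) | p <- s].
have : (chi g h - chi mu h) *: d = 0.
  apply: (IHm s'); rewrite ?size_map //.
  - move=> _ /mapP[q qs ->]; apply: weightZ.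
    by apply: ws; rewrite in_cons; apply/orP; right.
  - by move=> _ /mapP[q qs ->] /=; apply: sg; rewrite in_cons; apply/orP; right.
  - exact: weightZ.
  rewrite big_map scalerBl -wd // dE act_sum // !big_cons /=.
  rewrite (ws _ (mem_head _ _)) //= scalerDr opprD addrACA subrr add0r.
  rewrite scaler_sumr -sumrB; apply: eq_big_seq => p ps.
  by rewrite scalerBl ws // in_cons ps orbT.
by move/eqP; rewrite scaler_eq0 subr_eq0 eq_sym (negbTE chi_neq) => /eqP.
Qed.

End TorusAction.

Section Generated.
Variables (K : fieldType) (R : algType K) (N : nat) (x : 'I_N -> R) (k : nat).

Lemma gen0 : gen x k 0.
Proof. by exists [::]; split => //; rewrite big_nil. Qed.

Lemma gen_prod (l : seq 'I_N) :
  (forall i, i \in l -> (i < k)%N) -> gen x k (\prod_(i <- l) x i).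
Proof.
move=> lk; exists [:: (1, l)]; split; last by rewrite big_seq1 scale1r.
by move=> p; rewrite inE => /eqP ->.
Qed.

Lemma gen1 : gen x k 1.
Proof. by have := @gen_prod [::]; rewrite big_nil; apply. Qed.

Lemma gen_x (i : 'I_N) : (i < k)%N -> gen x k (x i).
Proof.
by move=> ik; have := @gen_prod [:: i]; rewrite big_seq1; apply=> j /[!inE] /eqP ->.
Qed.

Lemma gen_ind (P : R -> Prop) :
  P 0 -> P 1 -> (forall i : 'I_N, (i < k)%N -> P (x i)) ->
  (forall a b, gen x k a -> gen x k b -> P a -> P b -> P (a * b)) ->
  (forall c a b, gen x k a -> gen x k b -> P a -> P b -> P (c *: a + b)) ->
  forall r, gen x k r -> P r.
Proof.
move=> P0 P1 Px PM PDZ r [s [sk ->]].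
have Pprod (l : seq 'I_N) : (forall i, i \in l -> (i < k)%N) -> P (\prod_(i <- l) x i).
  elim: l => [|i l IHl] lk; first by rewrite big_nil.
  have ik : (i < k)%N by apply: lk; rewrite mem_head.
  have lk' j : j \in l -> (j < k)%N by move=> jl; apply: lk; rewrite inE jl orbT.
  by rewrite big_cons; apply: PM; [apply: gen_x | apply: gen_prod | apply: Px | apply: IHl].
elim: s sk => [|p s IHs] sk; first by rewrite big_nil.
have sk' q : q \in s -> forall i, i \in q.2 -> (i < k)%N.
  by move=> qs; apply: sk; rewrite inE qs orbT.
rewrite big_cons; apply: PDZ; [| by exists s | | exact: IHs].
  by apply: gen_prod; apply: sk; rewrite mem_head.
by apply: Pprod; apply: sk; rewrite mem_head.
Qed.

Lemma sder_eq0 (s d : R -> R) : is_sder_on x k s d -> s 1 = 1 ->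
  (forall i : 'I_N, (i < k)%N -> d (x i) = 0) -> forall r, gen x k r -> d r = 0.
Proof.
move=> [_ [dlin dmul]] s1 dx; apply: gen_ind => //.
- have := dlin 1 0 0 gen0 gen0; rewrite !scale1r addr0 => d0.
  by apply: (@addrI _ (d 0)); rewrite addr0 -d0.
- have := dmul 1 1 gen1 gen1; rewrite s1 !mul1r mulr1 => d1.
  by apply: (@addrI _ (d 1)); rewrite addr0 -d1.
- by move=> a b ga gb da db; rewrite dmul // da db mulr0 mul0r addr0.
- by move=> c a b ga gb da db; rewrite dlin // da db scaler0 addr0.
Qed.

End Generated.

Section GeneratedWeights.
Variables (K : fieldType) (R : algType K) (N n : nat).
Variables (act : torus_elt K n -> R -> R) (x : 'I_N -> R) (beta : 'I_N -> wtT n).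
Hypotheses (Hact : rational_torus_action act) (wx : forall i, is_weight act (x i) (beta i)).

Lemma act_fix_gen k h : in_torus h ->
  (forall i : 'I_N, (i < k)%N -> act h (x i) = x i) -> forall r, gen x k r -> act h r = r.
Proof.
move=> th hx; apply: gen_ind => //; first exact: act0.
- exact: act1.
- by move=> a b _ _ ha hb; rewrite actM // ha hb.
- by move=> c a b _ _ ha hb; rewrite act_linear // ha hb.
Qed.

Hypothesis K0 : [pchar K] =i pred0.

Lemma gen_weight_inQ k d g : gen x k d -> d != 0 -> is_weight act d g -> inQ beta k g.
Proof.
move=> [s [sk dE]] d0 wd.
pose s' := [seq (p.1 *: \prod_(i <- p.2) x i, \sum_(i <- p.2) beta i) | p <- s].
have [/hasP[_ /mapP[p ps ->] /= /eqP <-] | /hasPn s'g] := boolP (has (fun q => q.2 == g) s').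
  by apply: zspan_sum => i ip; apply: zspan_gen; apply: (sk p ps i ip).
case/eqP: d0; apply: (weight_sum_eq0 Hact K0 (s := s') _ s'g wd); last by rewrite dE big_map.
by move=> _ /mapP[p ps ->]; apply: weightZ => //; apply: weight_prod.
Qed.

End GeneratedWeights.

Lemma inQS N n (beta : 'I_N -> wtT n) (k : 'I_N) v :
  inQ beta k.+1 v <-> exists u (m : int), inQ beta k u /\ v = u + beta k *~ m.
Proof.
split=> [[c ->] | [u [m [uQ ->]]]].
  exists (\sum_(i < N | (i < k)%N) beta i *~ c i), (c k); split; first by exists c.
  rewrite (bigD1 k) /= ?ltnSn // addrC; congr (_ + _); apply: eq_bigl => i.
  by rewrite ltnS -val_eqE /= [RHS]ltn_neqAle andbC.
apply: zspanD; first by apply: zspan_sub uQ => i /= /ltnW.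
by apply: zspanMz; apply: zspan_gen => /=.
Qed.

Section QNA.
Variables (K : fieldType) (R : algType K) (N n : nat).
Variables (act : torus_elt K n -> R -> R) (x : 'I_N -> R).
Variables (sigma delta : 'I_N -> R -> R) (beta : 'I_N -> wtT n).
Hypotheses (K0 : [pchar K] =i pred0) (HQ : is_QNA act x sigma delta).
Hypothesis wx : forall i, is_weight act (x i) (beta i).

Let Hact : rational_torus_action act.
Proof. by case: HQ => _ []. Qed.

Lemma beta_inQ_delta_neq0 (k : 'I_N) : ~ delta_zero x delta k -> inQ beta k (beta k).
Proof.
case: HQ => [[_ [aut [sder [comm _]]]] [_ [_ [lam _]]]] ndz.
have [j jk dxj] : exists2 j : 'I_N, (j < k)%N & delta k (x j) != 0.
  have [/existsP[j /andP[]] | /existsPn dx] :=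
    boolP [exists j : 'I_N, (j < k)%N && (delta k (x j) != 0)]; first by exists j.
  case: ndz; apply: sder_eq0 (sder k) _ _ => [|i ik].
    by case: (aut k) => _ [_ [_ [_ [_ ->]]]].
  by move: (dx i); rewrite ik negbK => /eqP.
have [l _ sxj] := lam k j jk.
have dE : delta k (x j) = x k * x j + (- l) *: (x j * x k).
  by rewrite (comm k (x j) (gen_x x jk)) sxj -scalerAl scaleNr addrAC subrr add0r.
have wd : is_weight act (delta k (x j)) (beta k + beta j).
  rewrite dE; apply: weightD => //; first exact: weightM.
  by apply: weightZ => //; rewrite addrC; apply: weightM.
have gd : gen x k (delta k (x j)) by case: (sder k) => gd _; apply/gd/gen_x.
have Qkj := gen_weight_inQ Hact wx K0 gd dxj wd.
rewrite -[beta k](addrK (beta j)) -mulrN1z.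
by apply: zspanD Qkj _; apply: zspanMz; apply: zspan_gen.
Qed.

Lemma weights_orthogonal_eq0 (u : 'I_n -> int) :
  (forall i, dotz u (beta i) = 0) -> forall l, u l = 0.
Proof.
case: HQ => [[genN _] [[_ [_ [_ [_ [_ [_ faithful]]]]]] _]] ub l.
have th := exp2_torusP K0 u.
have hx i : act (exp2_torus K u) (x i) = x i by rewrite wx // chi_exp2 // ub expr0z scale1r.
have fix_all r : act (exp2_torus K u) r = r.
  by apply: (act_fix_gen Hact th (k := N)) => // i _; apply: hx.
have /ffunP/(_ l) := faithful _ th fix_all.
by rewrite !ffunE => /(expr2z_eq1 K0).
Qed.

Section RankIndices.
Variable f : 'I_n -> 'I_N.
Hypothesis Hf : forall k, delta_zero x delta k <-> exists j, f j = k.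

Lemma inQ_rank_span t v :
  inQ beta t v -> zspan (fun j => (f j < t)%N) (fun j => beta (f j)) v.
Proof.
elim: t v => [|t IHt] v; first by case=> c ->; rewrite big_pred0 //; apply: zspan0.
have sub w : zspan (fun j => (f j < t)%N) (fun j => beta (f j)) w ->
             zspan (fun j => (f j < t.+1)%N) (fun j => beta (f j)) w.
  by apply: zspan_sub => j /ltnW.
have [tN | Nt] := ltnP t N; last first.
  move=> vQ; apply/sub/IHt; apply: zspan_sub vQ => i _.
  exact: leq_trans (ltn_ord i) Nt.
case/(inQS beta (Ordinal tN)) => u [m [uQ ->]]; apply: zspanD; first exact/sub/IHt.
apply: zspanMz.
have [/existsP[j /eqP fj] | /existsPn nf] := boolP [exists j, f j == Ordinal tN].
  by rewrite -fj; apply: zspan_gen; rewrite fj.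
apply/sub/IHt/beta_inQ_delta_neq0 => /Hf[j fj].
by move: (nf j); rewrite fj eqxx.
Qed.

End RankIndices.

Lemma beta_free_delta0 (k : 'I_N) (m : int) :
  delta_zero x delta k -> inQ beta k (beta k *~ m) -> beta k *~ m = 0.
Proof.
case: HQ => _ [_ [_ [_ [_ [_ [f [_ Hf]]]]]]] dz mQ.
have [j0 fj0] := (Hf k).1 dz.
have [-> | m0] := eqVneq m 0; first by rewrite mulr0z.
have [w wj0 wrel] : exists2 w : 'I_n -> int, w j0 = m & \sum_j beta (f j) *~ w j = 0.
  apply: (@zspan_relation _ _ (fun j => (f j < k)%N)); first by rewrite fj0 ltnn.
  by rewrite fj0; apply: inQ_rank_span.
have [|u [l ul] uorth] := @int_relation_orthogonal _ _ w j0 _ wrel; first by rewrite wj0.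
case/eqP: ul; apply: weights_orthogonal_eq0 => i.
apply: (zspan_kernel (L := dotz u)) (fun j _ => uorth j) _.
by apply: (inQ_rank_span Hf (t := N)); apply: zspan_gen.
Qed.

End QNA.

Unset Implicit Arguments. Set Strict Implicit.

Theorem lemma5p5 (K : fieldType) (R : algType K) (N n : nat)
    (act : torus_elt K n -> R -> R) (x : 'I_N -> R)
    (sigma delta : 'I_N -> R -> R) (beta : 'I_N -> wtT n) :
  [pchar K] =i pred0 ->
  is_QNA act x sigma delta ->
  (forall i, is_weight act (x i) (beta i)) ->
  forall k : 'I_N,
    (~ delta_zero x delta k ->
       forall v, inQ beta k.+1 v <-> inQ beta k v) /\
    (delta_zero x delta k ->
       (forall v, inQ beta k.+1 v <->
          exists u (m : int), inQ beta k u /\ v = u + beta k *~ m) /\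
       (forall m : int, inQ beta k (beta k *~ m) -> beta k *~ m = 0)).
Proof.
move=> K0 HQ wx k; split=> [ndz v | dz].
  split; last by apply: zspan_sub => i /ltnW.
  case/inQS => u [m [uQ ->]]; apply: zspanD uQ _; apply: zspanMz.
  exact: beta_inQ_delta_neq0 K0 HQ wx k ndz.
split=> [v | m]; first exact: inQS.
exact: beta_free_delta0 K0 HQ wx k m dz.
Qed.
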